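(* For any space $X$ and $x\in X$, the following are equivalent: (1) $X$ is sequentially $0$-connected at $x$; (2) $X$ is path connected and $0$-tame at $x$; (3) $X$ is path connected and $\pi_0$-residual at $x$; (4) every sequence of (unbased) maps $\{f_{k}\}_{k\in\mathbb{N}}$, $f_k:S^0\to X$, that converges to $x$ is sequentially null-homotopic; (5) for every convergent sequence $x_k\to x$ in $X$, there exists a path $\alpha:I\to X$ such that $\alpha(1/k)=x_k$ for all $k$ and $\alpha(0)=x$.
   Context: All spaces Hausdorff; $I=[0,1]$, $S^0=\{-1,1\}$. $\mathbb{H}_0=\{0\}\cup\{1/m:m\in\mathbb{N}\}$ with basepoint $b_0=0$, and $\ell_m:S^0\to\mathbb{H}_0$ sends $-1\mapsto 0$, $1\mapsto 1/m$ (inclusion of the $m$-th copy of $S^0$ in the shrinking wedge). $[(\mathbb{H}_0,b_0),(X,x)]$ is the set of based homotopy classes; $\Theta_0:[(\mathbb{H}_0,b_0),(X,x)]\to\pi_0(X,x)^{\mathbb{N}}$, $[f]\mapsto([f\circ\ell_m])_m$. $X$ is sequentially $0$-connected at $x$ if $[(\mathbb{H}_0,b_0),(X,x)]$ is a singleton; $\pi_0$-residual at $x$ if $\Theta_0$ is injective; $\pi_0$-finitary at $x$ if every element of the image of $\Theta_0$ has all but finitely many coordinates equal to the path component of $x$; $0$-tame at $x$ if it is $\pi_0$-residual and $\pi_0$-finitary at $x$. A sequence of maps $\{f_k\}$ converges to $x$ if for every neighborhood $U$ of $x$, $\operatorname{Im}(f_k)\subseteq U$ for all but finitely many $k$; it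 is sequentially null-homotopic if there are free homotopies $H_k$ from $f_k$ to the constant map at $x$ such that $\{H_k\}$ converges to $x$. *)

From HB Require Import structures.
From mathcomp Require Import all_boot all_order all_algebra.
From mathcomp Require Import all_classical all_reals all_analysis.
From mathcomp Require Import Rstruct Rstruct_topology.
From Stdlib Require Import Rdefinitions.
Set Implicit Arguments. Unset Strict Implicit. Unset Printing Implicit Defensive.
Import Order.TTheory GRing.Theory Num.Theory.
Local Open Scope classical_set_scope.
Local Open Scope ring_scope.

Definition unitI : set R := `[0%R, 1%R]%classic.

Definition S0 : set R := [set t | t = (-1)%R \/ t = 1%R].

Definition H0 : set R := [set t | t = 0%R \/ exists m : nat, t = (m.+1%:R)^-1].

(* l_m : S^0 -> H_0, -1 |-> 0, 1 |-> 1/m   (here m >= 1) *)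
Definition ell (m : nat) : R -> R := fun t => (t + 1) / (2 * m%:R).

(* A map (A,a) -> (X,x) of a subspace A of R, represented by a function R -> X
   that is continuous on the subspace A. *)
Definition based_map (X : topologicalType) (A : set R) (a : R) (x : X) (f : R -> X) : Prop :=
  {within A, continuous f} /\ f a = x.

Definition based_htpy (X : topologicalType) (A : set R) (a : R) (x : X) (f g : R -> X) : Prop :=
  exists H : R * R -> X,
    {within unitI `*` A, continuous H} /\
    (forall s, A s -> H (0%R, s) = f s /\ H (1%R, s) = g s) /\
    (forall t, unitI t -> H (t, a) = x).

(* [(H0,0),(X,x)] is a singleton (it is always inhabited by the constant map) *)
Definition seq_0_connected (X : topologicalType) (x : X) : Prop :=
  forall f g, based_map H0 0%R x f -> based_map H0 0%R x g -> based_htpy H0 0%R x f g.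

(* Theta_0 [f] = ([f o l_m])_m, with [f o l_m] in pi_0(X,x) = [(S0,-1),(X,x)] *)
Definition pi0_residual (X : topologicalType) (x : X) : Prop :=
  forall f g, based_map H0 0%R x f -> based_map H0 0%R x g ->
    (forall m : nat, based_htpy S0 (-1)%R x (f \o ell m.+1) (g \o ell m.+1)) ->
    based_htpy H0 0%R x f g.

Definition pi0_finitary (X : topologicalType) (x : X) : Prop :=
  forall f, based_map H0 0%R x f ->
    exists N : nat, forall m : nat, leq N m ->
      based_htpy S0 (-1)%R x (f \o ell m.+1) (fun _ => x).

Definition tame0 (X : topologicalType) (x : X) : Prop :=
  pi0_residual x /\ pi0_finitary x.

Definition path_connected (X : topologicalType) : Prop :=
  forall y z : X, exists gamma : R -> X,
    {within unitI, continuous gamma} /\ gamma 0%R = y /\ gamma 1%R = z.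

Definition maps_converge_to (X : topologicalType) (T : Type) (A : set T)
    (f : nat -> T -> X) (x : X) : Prop :=
  forall U, nbhs x U -> \forall k \near \oo, f k @` A `<=` U.

Definition seq_null_homotopic (X : topologicalType) (f : nat -> R -> X) (x : X) : Prop :=
  exists H : nat -> R * R -> X,
    (forall k, {within unitI `*` S0, continuous (H k)}) /\
    (forall k s, S0 s -> H k (0%R, s) = f k s /\ H k (1%R, s) = x) /\
    maps_converge_to (unitI `*` S0) H x.

From HB Require Import structures.
From mathcomp Require Import all_boot all_order all_algebra.
From mathcomp Require Import all_classical all_reals all_analysis.
From mathcomp Require Import Rstruct Rstruct_topology.
From Stdlib Require Import Rdefinitions.
From mathcomp.algebra_tactics Require Import ring lra.
Import Order.TTheory GRing.Theory Num.Theory.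
Local Open Scope classical_set_scope.
Local Open Scope ring_scope.
Delimit Scope ring_scope with ring.

(* (1) => (4): the sequences f_k(-1) and f_k(1) converge to x, so they define
   two based maps H_0 -> X; both are null-homotopic, and the levels
   s = 1/(k+1) of the two null-homotopies are null-homotopies of the f_k.  They
   converge to x because I is compact (tube lemma).
   (4) => (5): a null-homotopy of the constant map S^0 -> x_k is a path p_k from
   x_k to x, and the p_k converge to x.  Running, between 1/(k+2) and 1/(k+1),
   along p_(k+1) from x_(k+1) to x and then back along p_k to x_k concatenates
   them into a single path, continuous at 0 since the p_k converge to x.
   (5) => (1): put alpha through the interleaved sequence f(1), g(1), f(1/2),
   g(1/2), ... and compose with a map I x H_0 -> I sending (0, 1/(k+1)) to
   1/(2k+1), (1, 1/(k+1)) to 1/(2k+2) and I x 0 to 0.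
   Finally, (1) makes every based map H_0 -> X null-homotopic, hence X 0-tame;
   (5) gives a path through y, z, x, x, ..., hence path connectedness; and in a
   path-connected space any two based maps S^0 -> X are homotopic, so
   pi_0-residuality already gives (1). *)

Lemma RN1E : (-1)%R = -1 :> R. Proof. by []. Qed.

Lemma unitIP t : unitI t <-> 0 <= t <= 1.
Proof. by rewrite /unitI /= in_itv /= R0E R1E. Qed.

Lemma ballRP (a b e : R) : ball a e b <-> `|a - b| < e.
Proof. by []. Qed.

Lemma ballR2P (a b : R * R) e :
  ball a e b <-> `|a.1 - b.1| < e /\ `|a.2 - b.2| < e.
Proof. by case: a b => ? ? [? ?]. Qed.

Lemma within_continuous_ballP {T : pseudoMetricType R} {Y : topologicalType}
    (A : set T) (f : T -> Y) :
  {within A, continuous f} <->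
  forall a, A a -> forall U, nbhs (f a) U ->
    exists2 e : R, 0 < e & forall b, A b -> ball a e b -> U (f b).
Proof.
rewrite subspace_continuousP; split=> cf a Aa U fU.
- have := cf a Aa U fU; rewrite /= nbhs_simpl /within /= => /nbhs_ballP [e e0 He].
  by exists e => // b Ab abe; exact: He.
- have [e e0 He] := cf a Aa U fU.
  rewrite /= nbhs_simpl /within /=; apply/nbhs_ballP; exists e => // b abe Ab.
  exact: He.
Qed.

Lemma within_continuous_comp {T1 T2 : pseudoMetricType R} {Y : topologicalType}
    {A : set T1} {B : set T2} {g : T1 -> T2} {h : T2 -> Y} :
  {within A, continuous g} -> (forall a, A a -> B (g a)) ->
  {within B, continuous h} -> {within A, continuous (h \o g)}.
Proof.
move=> /within_continuous_ballP cg AB /within_continuous_ballP ch.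
apply/within_continuous_ballP => a Aa U hU.
have [e1 e10 H1] := ch (g a) (AB a Aa) U hU.
have [e2 e20 H2] := cg a Aa (ball (g a) e1) (nbhsx_ballx _ _ e10).
by exists e2 => // b Ab ab; apply: H1; [exact: AB | exact: H2].
Qed.

Lemma within_continuous_slice {Y : topologicalType} (A : set R) (H : R * R -> Y) c :
  A c -> {within unitI `*` A, continuous H} ->
  {within unitI, continuous (fun t => H (t, c))}.
Proof.
move=> Ac /within_continuous_ballP cH; apply/within_continuous_ballP => t It U hU.
have [e e0 He] := cH (t, c) (conj It Ac) U hU.
exists e => // t' It' tt'; apply: He; first by split.
by apply/ballR2P; rewrite subrr normr0.
Qed.

Lemma S0_eq_of_close {s s'} : S0 s -> S0 s' -> `|s - s'| < 1 -> s' = s.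
Proof. by move=> [->|->] [->|->] //; rewrite RN1E R1E ltr_norml => /andP[]; lra. Qed.

Lemma within_continuous_I_S0 {Y : topologicalType} (H : R * R -> Y) :
  (forall s, S0 s -> {within unitI, continuous (fun t => H (t, s))}) ->
  {within unitI `*` S0, continuous H}.
Proof.
move=> cH; apply/within_continuous_ballP => -[t s] [/= It Ss] U hU.
have /within_continuous_ballP/(_ t It U hU) [e e0 He] := cH s Ss.
exists (Order.min e 1); first by rewrite lt_min e0 ltr01.
move=> [t' s'] [/= It' Ss'] /ballR2P[/=]; rewrite !lt_min => /andP[tt' _] /andP[_ ss'].
by rewrite (S0_eq_of_close Ss Ss' ss'); exact: He.
Qed.

Lemma ltf_inv_nat (a b : nat) : (0 < a)%nat -> (0 < b)%nat ->
  ((a%:R : R)^-1 < (b%:R)^-1) = (b < a)%nat.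
Proof. by move=> a0 b0; rewrite ltf_pV2 ?ltr_nat // qualifE /= ltr0n. Qed.

Lemma lef_inv_nat (a b : nat) : (0 < a)%nat -> (0 < b)%nat ->
  ((a%:R : R)^-1 <= (b%:R)^-1) = (b <= a)%nat.
Proof. by move=> a0 b0; rewrite lef_pV2 ?ler_nat // qualifE /= ltr0n. Qed.

Lemma inv_nat_gap_decr {k : nat} : (0 < k)%nat ->
  (k.+1%:R : R)^-1 - (k.+2%:R)^-1 <= (k%:R)^-1 - (k.+1%:R)^-1.
Proof.
rewrite -(ltr0n R) => k0; rewrite -[k.+2]addn2 -[k.+1]addn1 !natrD -subr_ge0.
have -> : (k%:R)^-1 - (k%:R + 1%:R)^-1 - ((k%:R + 1%:R)^-1 - (k%:R + 2%:R)^-1)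
    = 2 / (k%:R * (k%:R + 1) * (k%:R + 2)) :> R.
  by field; rewrite !lt0r_neq0 //; lra.
by apply: divr_ge0; [lra | rewrite !mulr_ge0 //; lra].
Qed.

Lemma H0_unitI s : H0 s -> unitI s.
Proof.
case=> [->|[m ->]]; apply/unitIP; first by rewrite R0E lexx ler01.
by rewrite invr_ge0 ler0n /= invf_le1 ?ltr0n // ler1n.
Qed.

Lemma H0_inv_isolated (k : nat) : exists2 e : R, 0 < e &
  forall b, H0 b -> `|(k.+1%:R)^-1 - b| < e -> b = (k.+1%:R)^-1.
Proof.
set r : R := (k.+1%:R)^-1; set q : R := (k.+2%:R)^-1.
have q0 : 0 < q by rewrite invr_gt0 ltr0n.
have qr : q < r by rewrite ltf_inv_nat.
exists (r - q); first by rewrite subr_gt0.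
move=> _ [->|[m ->]]; rewrite ?R0E ltr_norml => /andP[lo hi]; first lra.
move: lo hi; set b := (m.+1%:R)^-1 => lo hi.
case: (ltngtP m k) => [mk|km|mk]; last by rewrite /b mk.
- have : (k%:R : R)^-1 <= b by rewrite lef_inv_nat // (leq_ltn_trans _ mk).
  by have := inv_nat_gap_decr (leq_ltn_trans (leq0n m) mk); rewrite -/r -/q; lra.
- have : b <= q by rewrite lef_inv_nat.
  lra.
Qed.

Definition seq_on_H0 {X : Type} (x : X) (v : nat -> X) (r : R) : X :=
  if r == 0 then x else v (Num.truncn r^-1).-1.

Lemma seq_on_H0_0 {X : Type} (x : X) v : seq_on_H0 x v 0 = x.
Proof. by rewrite /seq_on_H0 eqxx. Qed.

Lemma seq_on_H0_inv {X : Type} (x : X) v k : seq_on_H0 x v (k.+1%:R)^-1 = v k.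
Proof. by rewrite /seq_on_H0 invr_eq0 pnatr_eq0 /= invrK natrK. Qed.

Lemma based_map_seq_on_H0 {X : topologicalType} {x : X} {v : nat -> X} :
  v @ \oo --> x -> based_map H0 0%R x (seq_on_H0 x v).
Proof.
move=> vx; split; last by rewrite R0E seq_on_H0_0.
apply/within_continuous_ballP => _ [->|[k ->]] U; rewrite ?R0E ?seq_on_H0_0 => xU.
- have [N _ vU] := vx U xU.
  exists (N.+1%:R)^-1; first by rewrite invr_gt0 ltr0n.
  move=> _ [->|[m ->]]; first by rewrite R0E seq_on_H0_0 => _; exact: nbhs_singleton.
  rewrite ballRP sub0r normrN ger0_norm ?invr_ge0 ?ler0n // ltf_inv_nat // ltnS.
  by move=> Nm; rewrite seq_on_H0_inv; apply: vU; exact: ltnW.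
- have [e e0 He] := H0_inv_isolated k; exists e => // b Hb /ballRP/(He b Hb) ->.
  exact: nbhs_singleton.
Qed.

Lemma based_map_cst {X : topologicalType} (x : X) : based_map H0 0%R x (fun=> x).
Proof. by split => //; apply: continuous_subspaceT; exact: cst_continuous. Qed.

Lemma htpy_on_H0_levels_cvg {X : topologicalType} {x : X} {H : R * R -> X} :
  {within unitI `*` H0, continuous H} -> (forall t, unitI t -> H (t, 0%R) = x) ->
  forall U, nbhs x U ->
    \forall k \near \oo, forall t, unitI t -> U (H (t, (k.+1%:R)^-1)).
Proof.
move=> /within_continuous_ballP cH Hx U xU.
have /compact_near_coveringP/near_covering_withinP cover := @segment_compact R 0 1.
apply: (cover nat \oo (fun k t => U (H (t, (k.+1%:R)^-1)))) => t It.
have [e e0 He] : exists2 e : R, 0 < e &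
    forall b, (unitI `*` H0) b -> ball (t, 0%R) e b -> U (H b).
  by apply: cH; [split=> //; left | rewrite Hx].
exists (ball t e, [set k | (k.+1%:R)^-1 < e]).
  by split; [exact: nbhsx_ballx | exact: near_infty_natSinv_lt (PosNum e0)].
move=> [t' k] [/= tt' ke] It'; apply: He; first by split=> //=; right; exists k.
by apply/ballR2P; split=> //=; rewrite R0E sub0r normrN ger0_norm.
Qed.

Definition nearest_nat (s : R) : nat := Num.truncn (s + 2^-1).

Lemma nearest_nat_itv {s} : 0 <= s ->
  (nearest_nat s)%:R <= s + 2^-1 < (nearest_nat s).+1%:R.
Proof. by move=> s_ge0; apply: truncn_itv; lra. Qed.

Lemma nearest_nat_gt (N : nat) s : N%:R + 2^-1 < s -> (N < nearest_nat s)%nat.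
Proof.
move=> Ns; have /andP[_ hi] := @nearest_nat_itv s ltac:(have := ler0n R N; lra).
by rewrite -(ltr_nat R); have := @natr1 R (nearest_nat s); lra.
Qed.

Section ConcatPaths.
Context {X : topologicalType} (x : X) (p : nat -> R -> X).
Hypothesis p_cont : forall k, {within unitI, continuous (p k)}.
Hypothesis p_end : forall k, p k 1 = x.

Definition zigzag_piece (c : nat) (s : R) : X := p c.-1 (2 * `|s - c%:R|)%ring.

(* On [c - 1/2, c + 1/2], [zigzag] runs along p_(c-1) from x to p_(c-1)(0)
   and back, so consecutive pieces meet at x. *)
Definition zigzag (s : R) : X := zigzag_piece (nearest_nat s) s.

Lemma zigzagE (c : nat) s : c%:R <= s + 2^-1 < c.+1%:R -> zigzag s = zigzag_piece c s.
Proof. by move=> cs; rewrite /zigzag /nearest_nat (truncn_def cs). Qed.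

Lemma zigzag_piece_end (c : nat) s : `|s - c%:R| = 2^-1 -> zigzag_piece c s = x.
Proof. by rewrite /zigzag_piece => ->; rewrite mulfV ?pnatr_eq0 // -R1E p_end. Qed.

Lemma zigzag_piece_near (c : nat) s0 U : `|s0 - c%:R| <= 2^-1 ->
  nbhs (zigzag_piece c s0) U -> exists2 d : R, 0 < d &
    forall s, `|s - c%:R| <= 2^-1 -> `|s0 - s| < d -> U (zigzag_piece c s).
Proof.
have param_unitI s : `|s - c%:R| <= 2^-1 -> unitI (2 * `|s - c%:R|)%ring.
  by move=> h; apply/unitIP; rewrite mulr_ge0 //=; lra.
move=> s0c s0U; have /within_continuous_ballP cp := p_cont c.-1.
have [e e0 He] := cp _ (param_unitI _ s0c) U s0U.
exists (e / 2) => [|s sc s0s]; first lra.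
apply: He; first exact: param_unitI.
rewrite ballRP -mulrBr normrM ger0_norm //.
by have := ler_dist_dist (s0 - c%:R) (s - c%:R); rewrite opprB addrA subrK; lra.
Qed.

Lemma zigzag_near_interior (c : nat) s0 U : c%:R < s0 + 2^-1 < c.+1%:R ->
  nbhs (zigzag s0) U -> exists2 d : R, 0 < d & forall s, `|s0 - s| < d -> U (zigzag s).
Proof.
move=> /andP[lo hi]; rewrite (@zigzagE c) ?(ltW lo) ?hi // => s0U.
have [|d d0 Hd] := @zigzag_piece_near c s0 U _ s0U; first by rewrite ler_norml; lra.
exists (Order.min d (Order.min (s0 + 2^-1 - c%:R) (c.+1%:R - (s0 + 2^-1)))).
  by rewrite !lt_min d0 !subr_gt0 lo hi.
move=> s; rewrite !lt_min => /and3P[s0d /ltr_normlP[l1 l2] /ltr_normlP[r1 r2]].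
rewrite (@zigzagE c); first by apply: Hd => //; rewrite ler_norml; lra.
by apply/andP; split; lra.
Qed.

Lemma zigzag_near_junction (c : nat) s0 U : s0 + 2^-1 = c.+1%:R ->
  nbhs (zigzag s0) U -> exists2 d : R, 0 < d & forall s, `|s0 - s| < d -> U (zigzag s).
Proof.
have cS : c.+1%:R = c%:R + 1 :> R by rewrite -natr1.
have cSS : c.+2%:R = c%:R + 2 :> R by rewrite -[c.+2]addn2 natrD.
move=> s0c; rewrite (@zigzagE c.+1); last by apply/andP; split; lra.
have endl : `|s0 - c%:R| = 2^-1 by rewrite ger0_norm; lra.
have endr : `|s0 - c.+1%:R| = 2^-1 by rewrite ler0_norm; lra.
rewrite zigzag_piece_end // => xU.
have [dl dl0 Hl] := @zigzag_piece_near c s0 U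
  ltac:(by rewrite endl) ltac:(by rewrite zigzag_piece_end).
have [dr dr0 Hr] := @zigzag_piece_near c.+1 s0 U
  ltac:(by rewrite endr) ltac:(by rewrite zigzag_piece_end).
exists (Order.min dl (Order.min dr 2^-1)); first by rewrite !lt_min dl0 dr0; lra.
move=> s; rewrite !lt_min => /and3P[sl sr /ltr_normlP[lo hi]].
have [s0s | ss0] := lerP s0 s.
- rewrite (@zigzagE c.+1); last by apply/andP; split; lra.
  by apply: Hr => //; rewrite ler_norml; lra.
- rewrite (@zigzagE c); last by apply/andP; split; lra.
  by apply: Hl => //; rewrite ler_norml; lra.
Qed.

Lemma zigzag_near {s0 U} : 0 <= s0 -> nbhs (zigzag s0) U ->
  exists2 d : R, 0 < d & forall s, `|s0 - s| < d -> U (zigzag s).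
Proof.
move=> s0_ge0; have /andP[lo hi] := nearest_nat_itv s0_ge0.
have [lt | ge] := ltrP (nearest_nat s0)%:R (s0 + 2^-1).
  by apply: (@zigzag_near_interior (nearest_nat s0)); rewrite lt hi.
have : (0 < nearest_nat s0)%nat by rewrite -(ltr_nat R); lra.
case: (nearest_nat s0) lo ge => // c lo ge _.
by apply: (@zigzag_near_junction c); apply/eqP; rewrite eq_le lo ge.
Qed.

Lemma zigzag_continuous s0 : 0 <= s0 -> {for s0, continuous zigzag}.
Proof.
move=> s0_ge0 U s0U; have [d d0 Hd] := zigzag_near s0_ge0 s0U.
by apply/nbhs_ballP; exists d => // s /ballRP; exact: Hd.
Qed.

Lemma zigzag_in_path s : 0 <= s ->
  exists2 t, unitI t & zigzag s = p (nearest_nat s).-1 t.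
Proof.
move=> s_ge0; exists (2 * `|s - (nearest_nat s)%:R|)%ring => //; apply/unitIP.
have /andP[lo hi] := nearest_nat_itv s_ge0.
have cS : (nearest_nat s).+1%:R = (nearest_nat s)%:R + 1 :> R by rewrite -natr1.
by rewrite mulr_ge0 //= -ler_pdivlMl ?ltr0n // mulr1 ler_norml; lra.
Qed.

Definition concat_paths (r : R) : X := if r <= 0 then x else zigzag r^-1.

Lemma concat_paths0 : concat_paths 0 = x.
Proof. by rewrite /concat_paths lexx. Qed.

Lemma concat_paths_inv (k : nat) : concat_paths (k.+1%:R)^-1 = p k 0.
Proof.
rewrite /concat_paths ifF; last by apply/negbTE; rewrite -ltNge invr_gt0 ltr0n.
rewrite invrK (@zigzagE k.+1); last by rewrite -natr1; apply/andP; split; lra.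
by rewrite /zigzag_piece subrr normr0 mulr0.
Qed.

Hypothesis p_cvg :
  forall U, nbhs x U -> \forall k \near \oo, forall t, unitI t -> U (p k t).

Lemma concat_paths_continuous : continuous concat_paths.
Proof.
move=> r; rewrite /continuous_at; have [r_lt0 | r_gt0 | {r}->] := ltrgtP r 0.
- have E : {near r, (fun=> x) =1 concat_paths}.
    by near=> r'; rewrite /concat_paths ifT // ltW //; near: r'; exact: lt_nbhsl.
  have -> : concat_paths r = x by rewrite /concat_paths ifT // ltW.
  exact: cvg_trans (near_eq_cvg E) (cvg_cst x).
- have E : {near r, zigzag \o GRing.inv =1 concat_paths}.
    near=> r'; rewrite /concat_paths ifF //.
    by apply/negbTE; rewrite -ltNge; near: r'; exact: lt_nbhsr.
  have -> : concat_paths r = (zigzag \o GRing.inv) r.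
    by rewrite /concat_paths ifF //; apply/negbTE; rewrite -ltNge.
  apply: cvg_trans (near_eq_cvg E) _.
  apply: continuous_comp; first exact: inv_continuous (lt0r_neq0 r_gt0).
  by apply: zigzag_continuous; rewrite invr_ge0 ltW.
- move=> U; rewrite /= concat_paths0 => xU; have [N _ HN] := p_cvg _ xU.
  apply/nbhs_ballP; exists (N.+1%:R)^-1 => [|r /ballRP]; first by rewrite /= invr_gt0 ltr0n.
  move=> rN; rewrite /= /concat_paths; case: ifPn => [_|]; first exact: nbhs_singleton.
  rewrite -ltNge => r_gt0; rewrite sub0r normrN gtr0_norm // in rN.
  have [|t It ->] := zigzag_in_path (r^-1); first by rewrite invr_ge0 ltW.
  have Nr : (N < nearest_nat r^-1)%nat.
    apply: nearest_nat_gt; have := @natr1 R N.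
    have : N.+1%:R < r^-1 by rewrite -[N.+1%:R]invrK ltf_pV2 ?posrE ?invr_gt0 ?ltr0n.
    lra.
  by apply: HN It; rewrite /= -ltnS prednK // (leq_ltn_trans _ Nr).
Unshelve. all: by end_near.
Qed.

End ConcatPaths.

Definition squeeze (q : R * R) : R := (q.2 / (2 - (1 - q.1) * q.2))%ring.

Lemma squeeze_denom_ge1 {t s} : unitI t -> unitI s -> 1 <= 2 - (1 - t) * s.
Proof.
move=> /unitIP/andP[t0 t1] /unitIP/andP[s0 s1].
have : (1 - t) * s <= 1 by rewrite mulr_ile1 //; lra.
lra.
Qed.

Lemma squeeze_continuous_at (q : R * R) : 2 - (1 - q.1) * q.2 != 0 ->
  {for q, continuous squeeze}.
Proof.
move=> d_neq0; apply: continuousM; first exact: cvg_snd.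
apply: continuousV => //; apply: (@continuousB R R^o); first exact: cvg_cst.
apply: continuousM; last exact: cvg_snd.
by apply: (@continuousB R R^o); [exact: cvg_cst | exact: cvg_fst].
Qed.

Lemma squeeze_continuous : {within unitI `*` unitI, continuous squeeze}.
Proof.
apply: continuous_in_subspaceT => -[t s] /set_mem[/= It Is].
have d1 := squeeze_denom_ge1 It Is.
by apply: squeeze_continuous_at; rewrite /= lt0r_neq0 //; lra.
Qed.

Lemma squeeze_unitI q : (unitI `*` unitI) q -> unitI (squeeze q).
Proof.
case: q => t s [/= It Is]; have d1 := squeeze_denom_ge1 It Is.
move/unitIP: Is => /andP[s0 s1]; move/unitIP: It => /andP[t0 t1]; apply/unitIP.
rewrite /squeeze /=; apply/andP; split; first by apply: divr_ge0; lra.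
rewrite ler_pdivrMr ?mul1r; last lra.
have : 0 <= (1 - t) * s by rewrite mulr_ge0 //; lra.
lra.
Qed.

Lemma squeeze_t0 t : squeeze (t, 0) = 0.
Proof. by rewrite /squeeze mul0r. Qed.

Lemma squeeze_0_inv (k : nat) : squeeze (0, (k.+1%:R)^-1) = ((k.*2).+1%:R)^-1.
Proof.
rewrite /squeeze /= subr0 mul1r -!natr1 -muln2 natrM.
have k0 : 0 <= (k%:R : R) by exact: ler0n.
by field; rewrite !lt0r_neq0 //; lra.
Qed.

Lemma squeeze_1_inv (k : nat) : squeeze (1, (k.+1%:R)^-1) = ((k.*2).+2%:R)^-1.
Proof.
rewrite /squeeze /= subrr mul0r subr0 -!natr1 -muln2 natrM.
have k0 : 0 <= (k%:R : R) by exact: ler0n.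
by field; rewrite !lt0r_neq0 //; lra.
Qed.

Lemma cvg_interleave {X : topologicalType} {x : X} {u w : nat -> X} :
  u @ \oo --> x -> w @ \oo --> x ->
  (fun j => if odd j then w j./2 else u j./2) @ \oo --> x.
Proof.
move=> ux wx U xU; have [N1 _ H1] := ux U xU; have [N2 _ H2] := wx U xU.
exists (maxn N1 N2).*2 => // j /=; rewrite -geq_half_double geq_max => /andP[j1 j2].
by case: odd; [exact: H2 | exact: H1].
Qed.

Lemma based_map_H0_cvg {X : topologicalType} {x : X} {f} :
  based_map H0 0%R x f -> (fun k => f (k.+1%:R)^-1) @ \oo --> x.
Proof.
move=> [/within_continuous_ballP cf <-] U xU.
have [e e0 He] := cf 0%R (or_introl erefl) U xU.
have [N _ HN] := near_infty_natSinv_lt (PosNum e0).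
exists N => // k /HN ke; apply: He; first by right; exists k.
by rewrite ballRP R0E sub0r normrN ger0_norm.
Qed.

Lemma ell_N1 m : ell m (-1)%R = 0.
Proof. by rewrite /ell RN1E addNr mul0r. Qed.

Lemma ell_1 m : ell m.+1 1%R = (m.+1%:R)^-1.
Proof.
rewrite /ell R1E -natr1; have m0 : 0 <= (m%:R : R) by exact: ler0n.
by field; rewrite lt0r_neq0 //; lra.
Qed.

Section Implications.
Context {X : topologicalType} (x : X).

Definition S0_seq_null_homotopic : Prop :=
  forall f : nat -> R -> X, (forall k, {within S0, continuous (f k)}) ->
    maps_converge_to S0 f x -> seq_null_homotopic f x.

Definition cvg_seq_on_path : Prop :=
  forall u : nat -> X, u @ \oo --> x ->
    exists alpha : R -> X, {within unitI, continuous alpha} /\ alpha 0%R = x /\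
      forall k : nat, alpha (k.+1%:R)^-1 = u k.

Lemma seq_0_connected_S0_seq_null_homotopic :
  seq_0_connected x -> S0_seq_null_homotopic.
Proof.
move=> conn f f_cont fx.
have fsx s : S0 s -> (fun k => f k s) @ \oo --> x.
  move=> Ss U xU; have [N _ HN] := fx U xU.
  by exists N => // k /HN; apply; exists s.
have [HF [HF_cont [HF_ends HF_base]]] :=
  conn _ _ (based_map_seq_on_H0 (fsx _ (or_introl erefl))) (based_map_cst x).
have [HG [HG_cont [HG_ends HG_base]]] :=
  conn _ _ (based_map_seq_on_H0 (fsx _ (or_intror erefl))) (based_map_cst x).
have H0k k : H0 (k.+1%:R)^-1 by right; exists k.
pose Hk k (q : R * R) :=
  if 0 < q.2 then HG (q.1, (k.+1%:R)^-1) else HF (q.1, (k.+1%:R)^-1).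
exists Hk; split; [|split].
- move=> k; apply: within_continuous_I_S0 => _ [->|->]; rewrite /Hk /= ?RN1E ?R1E.
    by rewrite ltr0N1; exact: within_continuous_slice (H0k k) HF_cont.
  by rewrite ltr01; exact: within_continuous_slice (H0k k) HG_cont.
- move=> k _ [->|->]; rewrite /Hk /= ?RN1E ?R1E ?ltr0N1 ?ltr01.
    by have [-> ->] := HF_ends _ (H0k k); rewrite seq_on_H0_inv.
  by have [-> ->] := HG_ends _ (H0k k); rewrite seq_on_H0_inv.
- move=> U xU.
  have [N1 _ HN1] := htpy_on_H0_levels_cvg HF_cont HF_base _ xU.
  have [N2 _ HN2] := htpy_on_H0_levels_cvg HG_cont HG_base _ xU.
  exists (maxn N1 N2) => // k /=; rewrite geq_max => /andP[k1 k2] _ [[t s] [/= It _] <-].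
  by rewrite /Hk /=; case: (0 < s); [exact: HN2 | exact: HN1].
Qed.

Lemma S0_seq_null_homotopic_cvg_seq_on_path : S0_seq_null_homotopic -> cvg_seq_on_path.
Proof.
move=> nullh u ux.
have cst_cont k : {within S0, continuous (fun=> u k)}.
  by apply: continuous_subspaceT; exact: cst_continuous.
have cst_cvg : maps_converge_to S0 (fun k _ => u k) x.
  by move=> U xU; have [N _ HN] := ux U xU; exists N => // k /HN uU _ [s _ <-].
have [H [H_cont [H_ends Hx]]] := nullh _ cst_cont cst_cvg.
have S0N1 : S0 (-1)%R by left.
pose p k t := H k (t, (-1)%R).
exists (concat_paths x p); split; [|split].
- apply: continuous_subspaceT; apply: concat_paths_continuous.
  + by move=> k; exact: within_continuous_slice S0N1 (H_cont k).
  + by move=> k; rewrite /p (H_ends k _ S0N1).2.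
  + move=> U xU; apply: filterS (Hx U xU) => k Hk t It.
    by apply: Hk; exists (t, (-1)%R).
- exact: concat_paths0.
- by move=> k; rewrite concat_paths_inv /p (H_ends k _ S0N1).1.
Qed.

Lemma cvg_seq_on_path_seq_0_connected : cvg_seq_on_path -> seq_0_connected x.
Proof.
move=> on_path f g fb gb.
have := cvg_interleave (based_map_H0_cvg fb) (based_map_H0_cvg gb).
move=> /on_path[a [a_cont [a0 av]]]; case: fb gb => _ f0 [_ g0].
exists (a \o squeeze); split; [|split].
- have IH0_II : unitI `*` H0 `<=` unitI `*` unitI.
    by move=> [t s] [/= It Hs]; split=> //; exact: H0_unitI.
  apply: within_continuous_comp (continuous_subspaceW IH0_II squeeze_continuous) _ a_cont.
  by move=> q /IH0_II; exact: squeeze_unitI.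
- move=> _ [->|[k ->]] /=; first by rewrite !squeeze_t0 a0 f0 g0.
  rewrite squeeze_0_inv squeeze_1_inv -[(k.*2).+2]/((k.*2).+1.+1) !av /=.
  by rewrite odd_double /= doubleK uphalf_double.
- by move=> t It /=; rewrite squeeze_t0 a0.
Qed.

Lemma cvg_seq_on_path_path_connected : cvg_seq_on_path -> path_connected X.
Proof.
move=> on_path y z.
have : nth x [:: y; z] k @[k --> \oo] --> x.
  by move=> U xU; exists 2%nat => // -[|[|k]] //= _; rewrite nth_nil; exact: nbhs_singleton.
move=> /on_path[a [a_cont [_ a_nth]]].
pose g (t : R) := ((1 + t)^-1)%ring.
exists (a \o g); split; [|split].
- apply: within_continuous_comp _ _ a_cont.
    apply: continuous_in_subspaceT => t /set_mem/unitIP/andP[t0 _].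
    apply: continuousV; first by rewrite /= lt0r_neq0 //; lra.
    by apply: (@continuousD R R^o); [exact: cvg_cst | exact: cvg_id].
  move=> t /unitIP/andP[t0 t1]; apply/unitIP; rewrite /g invr_ge0 /= invf_le1; lra.
- by rewrite /= /g R0E addr0; exact: (a_nth 0%nat).
- by rewrite /= /g R1E; exact: (a_nth 1%nat).
Qed.

Lemma seq_0_connected_tame0 : seq_0_connected x -> tame0 x.
Proof.
move=> conn; split=> [f g fb gb _ | f fb]; first exact: conn.
exists 0%nat => m _.
have [H [H_cont [H_ends H_base]]] := conn _ _ fb (based_map_cst x).
have ell_H0 s : S0 s -> H0 (ell m.+1 s).
  by move=> [->|->]; [left; rewrite ell_N1 | right; exists m; rewrite ell_1].
exists (fun q => H (q.1, ell m.+1 q.2)); split; [|split].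
- apply: within_continuous_I_S0 => s /ell_H0 Hs.
  exact: within_continuous_slice Hs H_cont.
- by move=> s /ell_H0 /H_ends[-> ->].
- by move=> t It /=; rewrite ell_N1 H_base.
Qed.

Lemma path_connected_pi0_residual_seq_0_connected :
  path_connected X -> pi0_residual x -> seq_0_connected x.
Proof.
move=> pc res f g fb gb; apply: res => // m.
have [gam [gam_cont [gam0 gam1]]] := pc (f (m.+1%:R)^-1) (g (m.+1%:R)^-1).
case: fb gb => _ f0 [_ g0].
exists (fun q => if 0 < q.2 then gam q.1 else x); split; [|split].
- apply: within_continuous_I_S0 => _ [->|->]; rewrite /= ?RN1E ?R1E ?ltr0N1 ?ltr01 //.
  by apply: continuous_subspaceT; exact: cst_continuous.
- move=> _ [->|->]; rewrite /= ?ell_N1 ?ell_1 ?RN1E ?R1E ?ltr0N1 ?ltr01 //.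
- by move=> t _ /=; rewrite RN1E ltr0N1.
Qed.
End Implications.

Theorem lemma2p21 (X : topologicalType) (hX : hausdorff_space X) (x : X) :
  [<-> seq_0_connected x;
       path_connected X /\ tame0 x;
       path_connected X /\ pi0_residual x;
       (forall f : nat -> R -> X,
          (forall k, {within S0, continuous (f k)}) ->
          maps_converge_to S0 f x -> seq_null_homotopic f x);
       (forall u : nat -> X, u @ \oo --> x ->
          exists alpha : R -> X,
            {within unitI, continuous alpha} /\ alpha 0%R = x /\
            forall k : nat, alpha ((k.+1%:R)^-1) = u k)].
Proof.
have conn_on_path : seq_0_connected x -> cvg_seq_on_path x.
  by move=> /seq_0_connected_S0_seq_null_homotopic/S0_seq_null_homotopic_cvg_seq_on_path.
tfae.
- move=> conn; split; last exact: seq_0_connected_tame0.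
  exact/cvg_seq_on_path_path_connected/conn_on_path.
- by case=> pc [res _].
- case=> pc res; apply: seq_0_connected_S0_seq_null_homotopic.
  exact: path_connected_pi0_residual_seq_0_connected.
- exact: S0_seq_null_homotopic_cvg_seq_on_path.
- exact: cvg_seq_on_path_seq_0_connected.
Qed.
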